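(* Assume $G$ is simply laced. Let $\varpi$ be a minuscule fundamental weight, $\bar\phi\in W/W_{P_\varpi}$, $\phi$ the minimal length element of $\bar\phi$, $\phi=s_{\gamma_1}\cdots s_{\gamma_n}$ a reduced expression with simple roots $\gamma_k$, $\beta_k=i(\gamma_k)$, $\alpha_1=\beta_1$ and $\alpha_k=s_{\beta_1}\cdots s_{\beta_{k-1}}(\beta_k)$. Let $\beta$ be the unique simple root with $\langle\beta^\vee,i(\varpi)\rangle=1$. Then for every $i\in[1,n]$, $$\sum_{k\in[i+1,n],\ \beta_k=\beta}\langle\alpha_i^\vee,\alpha_k\rangle=\begin{cases}1 & \text{if }\beta_i\neq\beta,\\ 0&\text{if }\beta_i=\beta.\end{cases}$$
   Context: $G$ is a semisimple algebraic group with maximal torus $T$, Borel subgroup $B$, simple roots $S$, Weyl group $W$ with longest element $w_0$; $s_\alpha$ is the reflection and $\alpha^\vee$ the coroot of a root $\alpha$. The Weyl involution $i$ sends a simple root $\gamma$ to $-w_0(\gamma)$ and a fundamental weight $\varpi$ to $-w_0(\varpi)$. A fundamental weight $\varpi$ is minuscule if $\langle\alpha^\vee,\varpi\rangle\le1$ for all positive roots $\alpha$; $P_\varpi$ is the associated maximal parabolic subgroup and $W_{P_\varpi}$ its Weyl group. *)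

(* Root datum of a semisimple simply-laced group, encoded by
   its Cartan matrix; all vectors live in Q^r written in the basis of simple
   roots (root lattice (x) Q = weight lattice (x) Q). *)
From mathcomp Require Import all_boot all_order all_algebra.
Set Implicit Arguments. Unset Strict Implicit. Unset Printing Implicit Defensive.
Import GRing.Theory Num.Theory.
Local Open Scope ring_scope.

Section RootDatum.
Variable r : nat.
Variable A : 'M[rat]_r.

Definition simply_laced_cartan : Prop :=
  (forall i, A i i = 2) /\
  (forall i j, i != j -> A i j = A j i /\ (A i j = 0 \/ A i j = -1)) /\
  (forall v : 'rV[rat]_r, v != 0 -> 0 < (v *m A *m v^T) 0 0).

Definition bform (x y : 'rV[rat]_r) : rat := (x *m A *m y^T) 0 0.

Definition coroot_pair (a x : 'rV[rat]_r) : rat := 2 * bform a x / bform a a.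

Definition refl (a x : 'rV[rat]_r) : 'rV[rat]_r := x - coroot_pair a x *: a.

Definition sroot (i : 'I_r) : 'rV[rat]_r := delta_mx 0 i.

(* fundamental weight varpi_j : <alpha_i^vee, varpi_j> = delta_ij *)
Definition fund_weight (j : 'I_r) : 'rV[rat]_r := sroot j *m (invmx A)^T.

Definition wact (w : seq 'I_r) (x : 'rV[rat]_r) : 'rV[rat]_r :=
  foldr (fun i y => refl (sroot i) y) x w.

Definition is_root (x : 'rV[rat]_r) : Prop :=
  exists (w : seq 'I_r) (i : 'I_r), x = wact w (sroot i).

Definition is_pos_root (x : 'rV[rat]_r) : Prop :=
  is_root x /\ forall j, 0 <= x 0 j.

Definition minuscule (p : 'I_r) : Prop :=
  forall a, is_pos_root a -> coroot_pair a (fund_weight p) <= 1.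

Definition reduced (w : seq 'I_r) : Prop :=
  forall v : seq 'I_r, wact v =1 wact w -> (size w <= size v)%N.

Definition longest (w0 : seq 'I_r) : Prop :=
  reduced w0 /\ forall w, reduced w -> (size w <= size w0)%N.

Definition winv (w0 : seq 'I_r) (x : 'rV[rat]_r) : 'rV[rat]_r := - wact w0 x.

(* g is a reduced expression of the minimal length element of the coset
   g W_P, where W_P (Weyl group of P_{varpi_p}) is generated by the simple
   reflections s_j, j != p. *)
Definition min_coset_rep (p : 'I_r) (g : seq 'I_r) : Prop :=
  forall u : seq 'I_r, all (fun j => j != p) u ->
  forall v : seq 'I_r, wact v =1 wact (g ++ u) -> (size g <= size v)%N.

(* alpha_k = s_{beta_1} ... s_{beta_{k-1}} (beta_k)  (0-based k) *)
Definition alpha (betas : seq 'rV[rat]_r) (k : nat) : 'rV[rat]_r :=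
  foldr refl (nth 0 betas k) (take k betas).

End RootDatum.

(* The isometry T = -w0 maps positive roots to positive roots (every root is
   positive or negative because the root lattice is even and positive
   definite), and it sends alpha_p to beta; transporting
   by T turns the sum into one over the inversion roots
   alpha_k = s_{g_1} ... s_{g_{k-1}} (alpha_{g_k}) of the word g with g_k = p.
   For F_k = s_{g_1} ... s_{g_{k-1}} (varpi_p) one has
   F_k - F_{k+1} = [g_k = p] alpha_k, so the sum telescopes to
   B(alpha_i, F_{i+1} - F_n) = gamma_p - [g_i = p], where
   gamma = s_{g_n} ... s_{g_{i+1}} (alpha_{g_i}).  Since the word is reduced,
   gamma is a positive root, so gamma_p is 0 or 1 because varpi_p is
   minuscule; and gamma_p = 0 would put s_gamma in W_P, whereas
   g s_gamma is g with its i-th letter deleted, contradicting minimality of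
   g in its coset. *)

From mathcomp Require Import all_boot all_order all_algebra.
From mathcomp Require Import ring lra.
Set Implicit Arguments. Unset Strict Implicit. Unset Printing Implicit Defensive.
Import Order.TTheory GRing.Theory Num.Theory.
Local Open Scope ring_scope.

Lemma intr_ge1 (R : archiNumDomainType) (c : R) :
  c \is a Num.int -> 0 < c -> 1 <= c.
Proof. by move=> cZ c_gt0; rewrite -(gtr0_norm c_gt0) norm_intr_ge1 ?lt0r_neq0. Qed.

Lemma nth_map_default (T1 T2 : Type) (x1 : T1) (x2 : T2) (f : T1 -> T2) s k :
  f x1 = x2 -> nth x2 (map f s) k = f (nth x1 s k).
Proof.
move=> fx1; case: (ltnP k (size s)) => [lt_k_s|le_s_k]; first exact: nth_map.
by rewrite !nth_default ?size_map.
Qed.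

Section RootSystem.
Variables (r : nat) (A : 'M[rat]_r).
Implicit Types (x y z a : 'rV[rat]_r) (i j : 'I_r) (w u v : seq 'I_r).

Local Notation B := (bform A).
Local Notation s i := (refl A (sroot i)).
Local Notation W w := (wact A w).
Local Notation sroots g := [seq sroot j | j <- g].

Lemma bformDl x y z : B (x + y) z = B x z + B y z.
Proof. by rewrite /bform !mulmxDl mxE. Qed.

Lemma bformDr x y z : B x (y + z) = B x y + B x z.
Proof. by rewrite /bform linearD mulmxDr mxE. Qed.

Lemma bformZl c x y : B (c *: x) y = c * B x y.
Proof. by rewrite /bform -!scalemxAl mxE. Qed.

Lemma bformZr c x y : B x (c *: y) = c * B x y.
Proof. by rewrite /bform linearZ -scalemxAr mxE. Qed.

Lemma bformNl x y : B (- x) y = - B x y.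
Proof. by rewrite -scaleN1r bformZl mulN1r. Qed.

Lemma bformNr x y : B x (- y) = - B x y.
Proof. by rewrite -scaleN1r bformZr mulN1r. Qed.

Lemma bformBl x y z : B (x - y) z = B x z - B y z.
Proof. by rewrite bformDl bformNl. Qed.

Lemma bformBr x y z : B x (y - z) = B x y - B x z.
Proof. by rewrite bformDr bformNr. Qed.

Lemma bform0l y : B 0 y = 0.
Proof. by rewrite -(scale0r 0) bformZl mul0r. Qed.

Lemma bform0r x : B x 0 = 0.
Proof. by rewrite -(scale0r 0) bformZr mul0r. Qed.

Lemma bform_suml (I : Type) (rI : seq I) (P : pred I) (F : I -> 'rV[rat]_r) y :
  B (\sum_(k <- rI | P k) F k) y = \sum_(k <- rI | P k) B (F k) y.
Proof. exact: (big_morph (B^~ y) (fun x z => bformDl x z y) (bform0l y)). Qed.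

Lemma bform_sumr (I : Type) (rI : seq I) (P : pred I) (F : I -> 'rV[rat]_r) x :
  B x (\sum_(k <- rI | P k) F k) = \sum_(k <- rI | P k) B x (F k).
Proof. exact: (big_morph _ (bformDr x) (bform0r x)). Qed.

Lemma bformE x y : B x y = \sum_i \sum_j x 0 i * A i j * y 0 j.
Proof.
rewrite /bform !mxE; under eq_bigr => j _ do rewrite !mxE big_distrl /=.
exact: exchange_big.
Qed.

Lemma sroot_coord i j : sroot i 0 j = (j == i)%:R.
Proof. by rewrite mxE. Qed.

Lemma sroot_inj : injective (@sroot r).
Proof.
move=> i j /(congr1 (fun x => x 0 i)); rewrite !sroot_coord eqxx.
by case: eqP => // _ /eqP; rewrite oner_eq0.
Qed.

Lemma bform_srootl i x : B (sroot i) x = \sum_j A i j * x 0 j.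
Proof.
rewrite /bform !mxE; apply: eq_bigr => j _; rewrite !mxE (bigD1 i) //= big1.
  by rewrite !mxE !eqxx mul1r addr0.
by move=> k /negbTE nki; rewrite !mxE nki mul0r.
Qed.

Lemma bform_sroot i j : B (sroot i) (sroot j) = A i j.
Proof.
rewrite bform_srootl (bigD1 j) //= big1 => [|k /negbTE nkj].
  by rewrite sroot_coord eqxx mulr1 addr0.
by rewrite sroot_coord nkj mulr0.
Qed.

Lemma bform_coordl x y : B x y = \sum_j x 0 j * B (sroot j) y.
Proof.
by rewrite {1}[x]row_sum_delta bform_suml; apply: eq_bigr => j _; rewrite bformZl.
Qed.

Lemma coroot_pair_root a x : B a a = 2 -> coroot_pair A a x = B a x.
Proof. by rewrite /coroot_pair => ->; rewrite mulrC mulKf. Qed.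

Lemma reflD a x y : refl A a (x + y) = refl A a x + refl A a y.
Proof.
rewrite /refl /coroot_pair bformDr !mulrDr !mulrDl scalerDl opprD.
by rewrite addrACA.
Qed.

Lemma reflZ a c x : refl A a (c *: x) = c *: refl A a x.
Proof.
rewrite /refl /coroot_pair bformZr scalerBr scalerA; congr (_ - _ *: _); ring.
Qed.

Lemma reflN a x : refl A a (- x) = - refl A a x.
Proof. by rewrite -scaleN1r reflZ scaleN1r. Qed.

Lemma reflB a x y : refl A a (x - y) = refl A a x - refl A a y.
Proof. by rewrite reflD reflN. Qed.

Lemma refl_oppl a x : refl A (- a) x = refl A a x.
Proof.
rewrite /refl /coroot_pair bformNl bformNr bformNl opprK scalerN -scaleNr.
by congr (_ - _ *: _); ring.
Qed.

Lemma reflK a : involutive (refl A a).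
Proof.
move=> x; have [a0|a_neq0] := eqVneq (B a a) 0.
  by rewrite /refl /coroot_pair a0 invr0 !mulr0 !scale0r !subr0.
have cN : coroot_pair A a (refl A a x) = - coroot_pair A a x.
  by rewrite {1}/refl /coroot_pair bformBr bformZr; field.
by rewrite {1}/refl cN scaleNr opprK /refl subrK.
Qed.

Lemma reflE a x : refl A a x = x - coroot_pair A a x *: a.
Proof. by []. Qed.

Lemma refl_coord i x j : j != i -> s i x 0 j = x 0 j.
Proof. by move=> /negbTE nji; rewrite /refl !mxE nji andbF mulr0 subr0. Qed.

Lemma wact_cat u v x : W (u ++ v) x = W u (W v x).
Proof. by rewrite /wact foldr_cat. Qed.

Lemma wact_rcons w i x : W (rcons w i) x = W w (s i x).
Proof. by rewrite -cats1 wact_cat. Qed.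

Lemma wact_revK w : cancel (wact A w) (wact A (rev w)).
Proof.
elim: w => [//|i w IH] x.
by rewrite rev_cons wact_rcons /= reflK IH.
Qed.

Lemma wactK w : cancel (wact A (rev w)) (wact A w).
Proof. by rewrite -{2}(revK w); apply: wact_revK. Qed.

Lemma wact_inj w : injective (wact A w).
Proof. exact: can_inj (wact_revK w). Qed.

Lemma wactD w x y : W w (x + y) = W w x + W w y.
Proof. by elim: w => [//|i w IH]; rewrite /= IH reflD. Qed.

Lemma wactZ w c x : W w (c *: x) = c *: W w x.
Proof. by elim: w => [//|i w IH]; rewrite /= IH reflZ. Qed.

Lemma wactN w x : W w (- x) = - W w x.
Proof. by rewrite -scaleN1r wactZ scaleN1r. Qed.

Lemma wactB w x y : W w (x - y) = W w x - W w y.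
Proof. by rewrite wactD wactN. Qed.

Lemma wact0 w : W w 0 = 0.
Proof. by have := wactZ w 0 0; rewrite !scale0r. Qed.

Lemma wact_sum w (F : 'I_r -> 'rV[rat]_r) : W w (\sum_j F j) = \sum_j W w (F j).
Proof. exact: (big_morph _ (wactD w) (wact0 w)). Qed.

Lemma alpha_map (f : 'rV[rat]_r -> 'rV[rat]_r) l k : f 0 = 0 ->
  (forall a x, f (refl A a x) = refl A (f a) (f x)) ->
  alpha A (map f l) k = f (alpha A l k).
Proof.
move=> f0 f_refl; rewrite /alpha -map_take (nth_map_default _ _ f0).
by elim: (take k l) => //= a t ->; rewrite f_refl.
Qed.

Lemma alpha_sroots g k : alpha A (sroots g) k = W (take k g) (nth 0 (sroots g) k).
Proof. by rewrite /alpha -map_take foldr_map. Qed.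

Hypothesis A_sym : forall i j, A i j = A j i.

Lemma bformC x y : B x y = B y x.
Proof.
have AT : A^T = A by apply/matrixP => i j; rewrite mxE A_sym.
have -> : B x y = (x *m A *m y^T)^T 0 0 by rewrite mxE.
by rewrite !trmx_mul trmxK AT mulmxA.
Qed.

Lemma bform_refl a x y : B (refl A a x) (refl A a y) = B x y.
Proof.
rewrite /refl /coroot_pair bformBl !bformBr !bformZl !bformZr (bformC x a).
have [->|nz] := eqVneq (B a a) 0; first by rewrite !invr0 !mulr0 !mul0r !subr0.
by field.
Qed.

Lemma bform_reflC a x y : B x (refl A a y) = B (refl A a x) y.
Proof. by rewrite -{1}(reflK a x) bform_refl. Qed.

Lemma bform_wact w x y : B (W w x) (W w y) = B x y.
Proof. by elim: w => [//|i w IH] /=; rewrite bform_refl IH. Qed.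

Lemma bform_wact_adj w x y : B x (W w y) = B (W (rev w) x) y.
Proof. by rewrite -(bform_wact (rev w)) wact_revK. Qed.

Lemma coroot_pair_isom (f : 'rV[rat]_r -> 'rV[rat]_r) a x :
  (forall y z, B (f y) (f z) = B y z) ->
  coroot_pair A (f a) (f x) = coroot_pair A a x.
Proof. by move=> fB; rewrite /coroot_pair !fB. Qed.

Lemma refl_refl a b x : refl A a (refl A b x) = refl A (refl A a b) (refl A a x).
Proof.
rewrite (reflE (refl A a b)) (coroot_pair_isom _ _ (bform_refl a)).
by rewrite (reflE b) reflB reflZ.
Qed.

Lemma wact_refl w a x : W w (refl A a x) = refl A (W w a) (W w x).
Proof. by elim: w => [//|i w IH]; rewrite /= IH refl_refl. Qed.

Hypothesis A_diag : forall i, A i i = 2.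

Lemma bform_srootii i : B (sroot i) (sroot i) = 2.
Proof. by rewrite bform_sroot A_diag. Qed.

Lemma coroot_pair_sroot i x : coroot_pair A (sroot i) x = B (sroot i) x.
Proof. exact/coroot_pair_root/bform_srootii. Qed.

Lemma refl_sroot i : s i (sroot i) = - sroot i.
Proof.
by rewrite /refl coroot_pair_sroot bform_srootii scaler_nat -opprB mulr2n addrK.
Qed.

Lemma root_sroot i : is_root A (sroot i).
Proof. by exists [::], i. Qed.

Lemma root_wact w x : is_root A x -> is_root A (W w x).
Proof. by case=> v [i ->]; exists (w ++ v), i; rewrite wact_cat. Qed.

Lemma root_opp x : is_root A x -> is_root A (- x).
Proof.
by case=> w [i ->]; exists (rcons w i), i; rewrite wact_rcons refl_sroot wactN.
Qed.

Lemma root_norm x : is_root A x -> B x x = 2.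
Proof. by case=> w [i ->]; rewrite bform_wact bform_srootii. Qed.

Lemma root_neq0 x : is_root A x -> x != 0.
Proof. by move/root_norm; apply: contra_eqN => /eqP ->; rewrite bform0l. Qed.

Lemma coroot_pair_rootE a x : is_root A a -> coroot_pair A a x = B a x.
Proof. by move/root_norm/coroot_pair_root. Qed.

Definition int_vec x := forall j, x 0 j \is a Num.int.

Hypothesis A_int : forall i j, A i j \is a Num.int.

Lemma bform_int x y : int_vec x -> int_vec y -> B x y \is a Num.int.
Proof.
move=> xZ yZ; rewrite bformE; apply: rpred_sum => i _; apply: rpred_sum => j _.
by rewrite !rpredM.
Qed.

Lemma sroot_int i : int_vec (sroot i).
Proof. by move=> j; rewrite sroot_coord; case: (j == i). Qed.

Lemma root_int x : is_root A x -> int_vec x.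
Proof.
case=> w [i ->]; elim: w => [|j w IH] /=; first exact: sroot_int.
move=> k; rewrite /refl coroot_pair_sroot !mxE.
rewrite rpredB ?IH //; apply: rpredM; first exact: bform_int (sroot_int j) IH.
exact: natr_int.
Qed.

(* [A i j = U i j + U j i] with [U] unitriangular, so [B x x] is twice an
   integer: the root lattice is even. *)
Lemma bform_even x : int_vec x -> B x x / 2 \is a Num.int.
Proof.
move=> xZ; pose U i j := if (i < j)%N then A i j else (i == j)%:R.
have AU i j : A i j = U i j + U j i.
  rewrite /U; case: ltngtP => [ij|ji|/val_inj->]; last by rewrite eqxx A_diag.
    by rewrite eq_sym -val_eqE (ltn_eqF ij) addr0.
  by rewrite -val_eqE eq_sym (ltn_eqF ji) add0r A_sym.
have -> : B x x = 2 * \sum_i \sum_j x 0 i * U i j * x 0 j.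
  rewrite bformE mulr2n mulrDl mul1r.
  transitivity (\sum_i \sum_j x 0 i * U i j * x 0 j
                + \sum_i \sum_j x 0 i * U j i * x 0 j).
    rewrite -big_split; apply: eq_bigr => i _; rewrite -big_split.
    by apply: eq_bigr => j _; rewrite AU mulrDr mulrDl.
  congr (_ + _); rewrite exchange_big.
  by apply: eq_bigr => i _; apply: eq_bigr => j _; ring.
rewrite mulrC mulKf // rpred_sum // => i _; rewrite rpred_sum // => j _.
by rewrite !rpredM //; rewrite /U; case: ifP => _; [|case: eqP].
Qed.

Hypothesis A_offdiag : forall i j, i != j -> A i j <= 0.

Hypothesis A_posdef : forall x, x != 0 -> 0 < B x x.

Lemma bform_int_ge2 x : int_vec x -> x != 0 -> 2 <= B x x.
Proof.
move=> xZ x0; have Bx := A_posdef x0.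
have := intr_ge1 (bform_even xZ) (divr_gt0 Bx (ltr0Sn _ 1)).
by rewrite ler_pdivlMr // mul1r.
Qed.

Definition nonneg x := [forall j, 0 <= x 0 j].

Definition nonpos x := [forall j, x 0 j <= 0].

(* Split [x] into its positive and negative parts [y - z]; these have
   disjoint supports, so [B y z <= 0] and [B x x >= B y y + B z z], which is
   at least 4 when neither part vanishes. *)
Lemma int_vec_sign x : int_vec x -> B x x = 2 -> nonneg x || nonpos x.
Proof.
move=> xZ Bx.
pose y := \row_j (if 0 <= x 0 j then x 0 j else 0).
pose z := \row_j (if 0 <= x 0 j then 0 else - x 0 j).
have xyz : x = y - z.
  by apply/rowP => j; rewrite !mxE; case: ifP; rewrite ?subr0 ?sub0r ?opprK.
have y_ge0 j : 0 <= y 0 j by rewrite mxE; case: ifP.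
have z_ge0 j : 0 <= z 0 j.
  by rewrite mxE; case: ifP => // /negbT; rewrite -ltNge oppr_ge0 => /ltW.
have yz0 j : y 0 j * z 0 j = 0 by rewrite !mxE; case: ifP; rewrite ?mulr0 ?mul0r.
have yZ : int_vec y by move=> j; rewrite mxE; case: ifP.
have zZ : int_vec z by move=> j; rewrite mxE; case: ifP; rewrite ?rpredN.
have Byz : B y z <= 0.
  rewrite bformE; apply: sumr_le0 => i _; apply: sumr_le0 => j _.
  have [<-|ij] := eqVneq i j; first by rewrite mulrAC yz0 mul0r.
  by rewrite mulr_le0_ge0 ?mulr_ge0_le0 ?A_offdiag.
have [y0|/(bform_int_ge2 yZ) By] := eqVneq y 0.
  by apply/orP; right; apply/forallP => j; rewrite xyz y0 sub0r mxE oppr_le0.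
have [z0|/(bform_int_ge2 zZ) Bz] := eqVneq z 0.
  by apply/orP; left; apply/forallP => j; rewrite xyz z0 subr0.
move: Bx; rewrite xyz bformBl !bformBr (bformC z y); lra.
Qed.

Lemma root_sign x : is_root A x -> nonneg x || nonpos x.
Proof. by move=> rx; apply: int_vec_sign; [exact: root_int | exact: root_norm]. Qed.

Lemma nonneg_opp x : nonneg x -> x != 0 -> ~~ nonneg (- x).
Proof.
move=> /forallP x_ge0; apply: contraNN => /forallP xN_ge0; apply/eqP/rowP => j.
have := xN_ge0 j; rewrite mxE oppr_ge0 => xj_le0.
by apply/eqP; rewrite mxE eq_le xj_le0 x_ge0.
Qed.

Lemma pos_root_supp1 i y : is_root A y -> nonneg y ->
  (forall j, j != i -> y 0 j = 0) -> y = sroot i.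
Proof.
move=> ry /forallP y_ge0 supp.
have ey : y = y 0 i *: sroot i.
  apply/rowP => j; rewrite !mxE; case: (eqVneq j i) => [->|/supp->].
    by rewrite mulr1.
  by rewrite mulr0.
have := root_norm ry; rewrite ey bformZl bformZr bform_srootii => ya2.
have ya1 : y 0 i = 1 by have := y_ge0 i; nra.
by rewrite ya1 scale1r.
Qed.

(* [s_i] only changes the [i]-coordinate, so a positive root sent to a
   negative one is supported on [i]. *)
Lemma refl_pos_root i y : is_root A y -> nonneg y -> ~~ nonneg (s i y) ->
  y = sroot i.
Proof.
move=> ry y_ge0 sy_neg; apply: pos_root_supp1 => // j ji.
have /orP[sy_ge0|/forallP sy_le0] := root_sign (root_wact [:: i] ry).
  by case/negP: sy_neg.
by apply/eqP; rewrite eq_le -{1}(refl_coord y ji) sy_le0 (forallP y_ge0).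
Qed.

Lemma wact_exchange v j : ~~ nonneg (W v (sroot j)) ->
  exists2 v', size v = (size v').+1 & forall x, W v' (s j x) = W v x.
Proof.
elim: v => [|i v IH] /= neg_vj.
  by case/negP: neg_vj; apply/forallP => k; rewrite sroot_coord ler0n.
have [vj_ge0|/IH[v' sz_v' Wv']] := boolP (nonneg (W v (sroot j))).
  exists v => // x; rewrite /= wact_refl.
  by rewrite (refl_pos_root (root_wact v (root_sroot j)) vj_ge0 neg_vj).
by exists (i :: v') => [|x]; rewrite /= ?sz_v' ?Wv'.
Qed.

Lemma reduced_rev w : reduced A w -> reduced A (rev w).
Proof.
move=> rw v Wv; rewrite size_rev -(size_rev v); apply: rw => x.
by rewrite -[RHS](wact_revK v) Wv wact_revK.
Qed.

Lemma reduced_catl u v : reduced A (u ++ v) -> reduced A u.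
Proof.
move=> ruv u' Wu'; have := ruv (u' ++ v).
by rewrite !size_cat leq_add2r; apply => x; rewrite !wact_cat Wu'.
Qed.

Lemma reduced_rcons w j : reduced A w -> nonneg (W w (sroot j)) ->
  reduced A (rcons w j).
Proof.
move=> rw wj_ge0 v Wv; rewrite size_rcons ltnNge; apply/negP => short_v.
have wj0 : W w (sroot j) != 0 by apply/root_neq0/root_wact/root_sroot.
have [v' sz_v' Wv'] : exists2 v', size v = (size v').+1 &
    forall x, W v' (s j x) = W v x.
  by apply: wact_exchange; rewrite Wv wact_rcons refl_sroot wactN nonneg_opp.
have : (size w <= size v')%N.
  by apply: rw => x; rewrite -[x](reflK (sroot j)) Wv' Wv wact_rcons reflK.
by rewrite -ltnS -sz_v' ltnNge short_v.
Qed.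

Lemma reduced_rcons_nonneg w j : reduced A (rcons w j) ->
  nonneg (W w (sroot j)).
Proof.
move=> rw; apply/negPn/negP => /wact_exchange[w' sz_w Ww'].
have : (size (rcons w j) <= size w')%N.
  by apply: rw => x; rewrite wact_rcons -Ww' reflK.
by rewrite size_rcons sz_w => /ltnW; rewrite ltnn.
Qed.

Lemma longest_nonpos w0 j : longest A w0 -> nonpos (W w0 (sroot j)).
Proof.
case=> rw0 max_w0.
have /orP[w0j_ge0|//] := root_sign (root_wact w0 (root_sroot j)).
by have := max_w0 _ (reduced_rcons rw0 w0j_ge0); rewrite size_rcons ltnn.
Qed.

Definition height x := \sum_j x 0 j.

Lemma height_refl j x : height (s j x) = height x - B (sroot j) x.
Proof.
rewrite /height /refl coroot_pair_sroot; under eq_bigr => k _ do rewrite !mxE.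
rewrite sumrB; congr (_ - _); rewrite (bigD1 j) //= !eqxx mulr1 big1 ?addr0 //.
by move=> k /negbTE->; rewrite mulr0.
Qed.

Lemma coord_le_height x j : nonneg x -> x 0 j <= height x.
Proof.
move=> /forallP x_ge0; rewrite /height (bigD1 j) //= lerDl.
by apply: sumr_ge0 => k _.
Qed.

Lemma pos_root_bform_gt0 y : is_root A y -> nonneg y ->
  exists2 j, 0 < y 0 j & 0 < B (sroot j) y.
Proof.
move=> ry /forallP y_ge0.
have [/existsP[j /andP[]]|/existsPn all_le0] :=
  boolP [exists j, (0 < y 0 j) && (0 < B (sroot j) y)]; first by exists j.
have := root_norm ry; rewrite bform_coordl => By.
suff : \sum_j y 0 j * B (sroot j) y <= 0 by rewrite By.
apply: sumr_le0 => j _; have := all_le0 j; rewrite negb_and -!leNgt.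
case/orP => [yj_le0|]; last exact: mulr_ge0_le0.
have -> : y 0 j = 0 by apply/eqP; rewrite eq_le yj_le0 y_ge0.
by rewrite mul0r.
Qed.

(* Descend along simple reflections [y -> s_j y] that lower the height;
   they never involve [s_p] since [y 0 p = 0], and
   [s_y = s_j s_(s_j y) s_j]. *)
Lemma parabolic_refl p y : is_root A y -> nonneg y -> y 0 p = 0 ->
  exists2 u, all (fun j => j != p) u & forall x, W u x = refl A y x.
Proof.
move=> ry y_ge0 yp.
have [n] : exists n : nat, height y < n%:R.
  exists (Num.Def.archi_bound (height y)); apply: archi_boundP.
  by apply: sumr_ge0 => j _; apply/(forallP y_ge0).
elim: n y ry y_ge0 yp => [|n IH] y ry y_ge0 yp hy.
  have [j yj _] := pos_root_bform_gt0 ry y_ge0.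
  by move: (coord_le_height j y_ge0); lra.
have [j yj Byj] := pos_root_bform_gt0 ry y_ge0.
have jp : j != p by apply: contraTneq yj => ->; rewrite yp ltxx.
have [->|yj'] := eqVneq y (sroot j); first by exists [:: j]; rewrite /= ?jp.
have sy_ge0 : nonneg (s j y).
  by apply: contraNT yj' => /(refl_pos_root ry y_ge0) ->.
have Byj1 : 1 <= B (sroot j) y.
  exact: intr_ge1 (bform_int (sroot_int j) (root_int ry)) Byj.
have syp : s j y 0 p = 0 by rewrite refl_coord 1?eq_sym.
have [|u u_p Wu] := IH (s j y) (root_wact [:: j] ry) sy_ge0 syp.
  by rewrite height_refl; move: hy; rewrite -natr1; lra.
exists (j :: rcons u j) => [|x]; first by rewrite /= jp all_rcons jp.
by rewrite /= wact_rcons Wu refl_refl !reflK.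
Qed.

Lemma cartan_unit : A \in unitmx.
Proof.
rewrite unitmxE unitfE; apply/negP => /det0P[v v0 vA].
by have := A_posdef v0; rewrite /bform vA mul0mx mxE ltxx.
Qed.

Lemma bform_fund_weight x p : B x (fund_weight A p) = x 0 p.
Proof.
rewrite /bform /fund_weight trmx_mul trmxK mulmxA -(mulmxA x).
by rewrite mulmxV ?cartan_unit // mulmx1 trmx_delta -colE mxE.
Qed.

Lemma min_coset_rep_coord p u j v : minuscule A p ->
  min_coset_rep A p (u ++ j :: v) -> W (rev v) (sroot j) 0 p = 1.
Proof.
move=> minp ming; set y := W (rev v) (sroot j).
have ry : is_root A y by apply/root_wact/root_sroot.
have y_ge0 : nonneg y.
  apply: reduced_rcons_nonneg; apply: (@reduced_catl _ (rev u)).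
  rewrite -rev_cons -rev_cat; apply: reduced_rev => w Ww.
  by apply: (ming [::]) => // x; rewrite Ww cats0.
have yp_le1 : y 0 p <= 1.
  have := minp y (conj ry (forallP y_ge0)).
  by rewrite coroot_pair_rootE // bform_fund_weight.
have [yp0|yp_neq0] := eqVneq (y 0 p) 0; last first.
  apply/eqP; rewrite eq_le yp_le1 intr_ge1 ?(root_int ry) //.
  by rewrite lt_neqAle eq_sym yp_neq0 (forallP y_ge0).
have [w w_p Ww] := parabolic_refl ry y_ge0 yp0.
have : (size (u ++ j :: v) <= size (u ++ v))%N.
  apply: (ming w w_p) => x; rewrite !wact_cat Ww; congr (W u _).
  by rewrite /= /y wact_refl wactK reflK.
by rewrite !size_cat /= addnS ltnn.
Qed.

(* With [F k = W (take k g) varpi_p], the k-th summand is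
   [B (alpha i) (F k - F k.+1)], so the sum telescopes. *)
Lemma sum_coroot_pair_inversions g p (i : nat) : (i < size g)%N ->
  \sum_(i.+1 <= k < size g | nth 0 (sroots g) k == sroot p)
      coroot_pair A (alpha A (sroots g) i) (alpha A (sroots g) k)
  = W (rev (drop i.+1 g)) (nth 0 (sroots g) i) 0 p
    - (nth 0 (sroots g) i == sroot p)%:R.
Proof.
move=> lti; set om := fund_weight A p.
have nthE k : (k < size g)%N -> nth 0 (sroots g) k = sroot (nth p g k).
  exact: nth_map.
have alphaE k : (k < size g)%N ->
    alpha A (sroots g) k = W (take k g) (sroot (nth p g k)).
  by move=> ltk; rewrite alpha_sroots nthE.
pose F k := W (take k g) om.
have dF k : (k < size g)%N ->
    F k - F k.+1 = (nth p g k == p)%:R *: alpha A (sroots g) k.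
  move=> ltk; rewrite /F (take_nth p) // wact_rcons -wactB alphaE // -wactZ.
  rewrite /refl opprB addrC subrK coroot_pair_sroot bform_fund_weight sroot_coord.
  by rewrite eq_sym.
rewrite nthE // (inj_eq sroot_inj) big_mkcond.
rewrite (eq_big_nat _ _ (F2 := fun k => B (alpha A (sroots g) i) (F k - F k.+1))).
  rewrite -bform_sumr.
  have -> : \sum_(i.+1 <= k < size g) (F k - F k.+1) = F i.+1 - F (size g).
    rewrite -opprB -telescope_sumr // -sumrN.
    by apply: eq_bigr => k _; rewrite opprB.
  have gE : g = take i g ++ nth p g i :: drop i.+1 g.
    by rewrite -drop_nth // cat_take_drop.
  rewrite /F take_size (take_nth p) // wact_rcons alphaE // [in W g _]gE.
  rewrite wact_cat -wactB bform_wact /=.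
  rewrite -reflB bform_reflC refl_sroot bformNl bformBr opprB.
  by rewrite bform_wact_adj !bform_fund_weight sroot_coord eq_sym.
move=> k /andP[_ ltk]; rewrite nthE // (inj_eq sroot_inj) dF // bformZr.
rewrite coroot_pair_rootE; last by rewrite alphaE //; apply/root_wact/root_sroot.
by case: (nth p g k == p); rewrite ?mul1r ?mul0r.
Qed.

Section WeylInvolution.
Variable w0 : seq 'I_r.
Local Notation T := (winv A w0).

Lemma winv0 : T 0 = 0.
Proof. by rewrite /winv wact0 oppr0. Qed.

Lemma winv_inj : injective T.
Proof. by move=> x y; rewrite /winv => /oppr_inj/wact_inj. Qed.

Lemma bform_winv x y : B (T x) (T y) = B x y.
Proof. by rewrite /winv bformNl bformNr opprK bform_wact. Qed.

Lemma winvB x y : T (x - y) = T x - T y.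
Proof. by rewrite /winv wactB opprD. Qed.

Lemma winv_refl a x : T (refl A a x) = refl A (T a) (T x).
Proof. by rewrite /winv refl_oppl reflN wact_refl. Qed.

Hypothesis longest_w0 : longest A w0.

Lemma winv_nonneg x : nonneg x -> nonneg (T x).
Proof.
move=> /forallP x_ge0; apply/forallP => k.
rewrite /winv {1}[x]row_sum_delta wact_sum -sumrN summxE; apply: sumr_ge0 => j _.
rewrite wactZ -scalerN mxE mulr_ge0 // mxE oppr_ge0.
exact: (forallP (longest_nonpos j longest_w0)).
Qed.

(* The root [x = T^-1 (sroot q)] has [x 0 p = 1]; then [T (x - sroot p)]
   is nonnegative, which squeezes the positive root [T (sroot p)] onto
   [sroot q]. *)
Lemma winv_sroot p q :
  coroot_pair A (sroot q) (T (fund_weight A p)) = 1 -> T (sroot p) = sroot q.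
Proof.
move=> pair_q.
set x := - W (rev w0) (sroot q).
have Tx : T x = sroot q by rewrite /winv /x wactN opprK wactK.
have rx : is_root A x by apply/root_opp/root_wact/root_sroot.
have xp : x 0 p = 1.
  by rewrite -bform_fund_weight -bform_winv Tx -coroot_pair_sroot.
have x_ge0 : nonneg x.
  have /orP[//|/forallP x_le0] := root_sign rx.
  by have := x_le0 p; rewrite xp ler10.
clearbody x.
have ry : is_root A (T (sroot p)) by apply/root_opp/root_wact/root_sroot.
have Tp_ge0 : nonneg (T (sroot p)).
  by apply: winv_nonneg; apply/forallP => j; rewrite sroot_coord ler0n.
have : nonneg (T (x - sroot p)).
  apply/winv_nonneg/forallP => j; rewrite !mxE.
  case: (eqVneq j p) => [->|jp]; first by rewrite eqxx xp subrr.
  by rewrite andbF subr0 (forallP x_ge0).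
rewrite winvB Tx => /forallP sub_ge0.
apply: pos_root_supp1 => // k kq; apply/eqP.
rewrite eq_le (forallP Tp_ge0) andbT.
by have := sub_ge0 k; rewrite mxE sroot_coord (negbTE kq) mxE add0r oppr_ge0.
Qed.

End WeylInvolution.

End RootSystem.

Lemma simply_laced_cartanP r (A : 'M[rat]_r) : simply_laced_cartan A ->
  [/\ forall i j, A i j = A j i, forall i, A i i = 2,
      forall i j, A i j \is a Num.int, forall i j, i != j -> A i j <= 0
    & forall x, x != 0 -> 0 < bform A x x].
Proof.
case=> diag [off posdef]; split=> // [i j|i j|i j /off[_ []->]] //.
- by case: (eqVneq i j) => [->|/off[]].
- by case: (eqVneq i j) => [->|/off[_ []->]]; rewrite ?diag.
Qed.

Theorem mainTheorem5 (r : nat) (A : 'M[rat]_r) (p q : 'I_r) (w0 g : seq 'I_r) :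
  simply_laced_cartan A ->
  minuscule A p ->
  longest A w0 ->
  min_coset_rep A p g ->
  coroot_pair A (sroot q) (winv A w0 (fund_weight A p)) = 1 ->
  let betas := [seq winv A w0 (sroot i) | i <- g] in
  forall i : nat, (i < size g)%N ->
    \sum_(i.+1 <= k < size g | nth 0 betas k == sroot q)
        coroot_pair A (alpha A betas i) (alpha A betas k)
    = (if nth 0 betas i != sroot q then 1 else 0).
Proof.
move=> /simply_laced_cartanP[A_sym A_diag A_int A_off A_pos] minp longw0 ming.
move=> pair_q betas i lti; set sr := [seq sroot j | j <- g].
have Tp := winv_sroot A_sym A_diag A_int A_off A_pos longw0 pair_q.
have -> : betas = map (winv A w0) sr by rewrite /betas /sr -map_comp.
have nth_betas k :
    (nth 0 (map (winv A w0) sr) k == sroot q) = (nth 0 sr k == sroot p).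
  by rewrite (nth_map_default _ _ (winv0 _ _)) -Tp (inj_eq (@winv_inj _ A w0)).
under eq_bigl => k do rewrite nth_betas.
under eq_bigr => k _ do
  rewrite !(alpha_map _ _ (winv0 _ _) (winv_refl A_sym _))
          (coroot_pair_isom _ _ (bform_winv A_sym _)).
rewrite nth_betas sum_coroot_pair_inversions // (nth_map p) //.
rewrite (min_coset_rep_coord A_sym A_diag A_int A_off A_pos (u := take i g) minp).
  by case: eqP.
by rewrite -drop_nth // cat_take_drop.
Qed.
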